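(* Let $A$ be a commutative ring, $\sigma$ a hereditary torsion theory on $A$-modules, and $M$ a totally $\sigma$-simple $A$-module with companion ideal $\mathfrak{h}\in\mathcal{L}(\sigma)$. Then: (1) $M\mathfrak{h}$ is not totally $\sigma$-torsion; hence $M\mathfrak{h}$ is the smallest submodule of $M$ that is not totally $\sigma$-torsion, and every submodule of $M$ that is not totally $\sigma$-torsion is itself totally $\sigma$-simple. (5) If $M'$ is a totally $\sigma$-simple $A$-module and $f:M\to M'$ is a surjective homomorphism, then $\ker f$ is totally $\sigma$-torsion.
   Context: $\mathcal{L}(\sigma)$ is the Gabriel filter of $\sigma$. A module $X$ is totally $\sigma$-torsion if $X\mathfrak{k}=0$ for some $\mathfrak{k}\in\mathcal{L}(\sigma)$. An $A$-module $M$ is totally $\sigma$-simple if $M$ is not totally $\sigma$-torsion and there exists $\mathfrak{h}\in\mathcal{L}(\sigma)$, called a companion ideal, such that $M\mathfrak{h}\subseteq H$ for every submodule $H\subseteq M$ that is not totally $\sigma$-torsion. *)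

From HB Require Import structures.
From mathcomp Require Import all_boot all_order all_algebra.
Set Implicit Arguments. Unset Strict Implicit. Unset Printing Implicit Defensive.
Import GRing.Theory.
Local Open Scope ring_scope.

Section Defs.
Variable A : comPzRingType.

Definition is_ideal (I : A -> Prop) : Prop :=
  I 0 /\ (forall x y, I x -> I y -> I (x + y)) /\ (forall a x, I x -> I (a * x)).

Definition colon (J : A -> Prop) (a : A) : A -> Prop := fun b => J (b * a).

(* Gabriel filter (Gabriel topology) of ideals of A, axioms T1--T4 (Stenstrom). *)
Definition gabriel_filter (L : (A -> Prop) -> Prop) : Prop :=
  (forall I, L I -> is_ideal I) /\
  L (fun _ => True) /\
  (forall I J, L I -> is_ideal J -> (forall x, I x -> J x) -> L J) /\
  (forall I J, L I -> L J -> L (fun x => I x /\ J x)) /\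
  (forall I a, L I -> L (colon I a)) /\
  (forall I J, L I -> is_ideal J -> (forall a, I a -> L (colon J a)) -> L J).

Variable M : lmodType A.

Definition is_submod (H : M -> Prop) : Prop :=
  H 0 /\ (forall x y, H x -> H y -> H (x + y)) /\ (forall a x, H x -> H (a *: x)).

Definition prodmod (H : M -> Prop) (I : A -> Prop) : M -> Prop :=
  fun x => exists n (a : 'I_n -> A) (m : 'I_n -> M),
    (forall i, I (a i)) /\ (forall i, H (m i)) /\ x = \sum_(i < n) a i *: m i.

Definition annihilated (X : M -> Prop) (k : A -> Prop) : Prop :=
  forall x a, X x -> k a -> a *: x = 0.

Definition ttorsion (L : (A -> Prop) -> Prop) (X : M -> Prop) : Prop :=
  exists k, L k /\ annihilated X k.

Definition companion (L : (A -> Prop) -> Prop) (H : M -> Prop) (h : A -> Prop) : Prop :=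
  L h /\ forall K, is_submod K -> (forall x, K x -> H x) -> ~ ttorsion L K ->
    forall x, prodmod H h x -> K x.

(* the submodule H of M, viewed as an A-module, is totally sigma-simple *)
Definition tsimple (L : (A -> Prop) -> Prop) (H : M -> Prop) : Prop :=
  is_submod H /\ ~ ttorsion L H /\ exists h, companion L H h.

End Defs.

Definition tsimple_module (A : comPzRingType) (L : (A -> Prop) -> Prop)
  (M : lmodType A) : Prop := tsimple L (fun _ : M => True).

From HB Require Import structures.
From mathcomp Require Import all_boot all_order all_algebra.
From Stdlib Require Import Classical_Prop.
Set Implicit Arguments. Unset Strict Implicit. Unset Printing Implicit Defensive.
Import GRing.Theory.
Local Open Scope ring_scope.

(* Let M be totally sigma-simple with companion ideal h.
   - The product H h of a submodule H with an ideal is a submodule, and it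
     contains every a x with a in h, x in H.
   - If H h is annihilated by some k in L(sigma), then for every a in h the
     colon ideal (Ann H : a) contains k, hence lies in L(sigma); axiom T4 of
     the Gabriel filter then puts Ann H itself in L(sigma), i.e. H is totally
     torsion.  So M h is not totally torsion, and by the companion property it
     is the smallest such submodule of M.
   - A companion ideal of H is a companion ideal of every submodule of H, so
     non-torsion submodules of M are totally sigma-simple.
   - If f : M -> M' is onto and ker f is not totally torsion, then M h lies in
     ker f, so h annihilates M' = f(M), and M' would be totally torsion. *)

Section Products.
Variables (A : comPzRingType) (M : lmodType A).

Lemma prodmod_scale (H : M -> Prop) (I : A -> Prop) a x :
  I a -> H x -> prodmod H I (a *: x).
Proof.
move=> Ia Hx; exists 1%N, (fun _ => a), (fun _ => x).
by split=> //; split=> //; rewrite big_ord1.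
Qed.

Lemma prodmod_submod (H : M -> Prop) (I : A -> Prop) :
  is_ideal I -> is_submod (prodmod H I).
Proof.
move=> [_ [_ IM]]; split; [|split].
- exists 0%N, (fun _ => 0), (fun _ => 0).
  by split=> [[]//|]; split=> [[]//|]; rewrite big_ord0.
- move=> _ _ [n1 [a1 [m1 [Ia1 [Hm1 ->]]]]] [n2 [a2 [m2 [Ia2 [Hm2 ->]]]]].
  pose glue T (u : 'I_n1 -> T) (v : 'I_n2 -> T) (i : 'I_(n1 + n2)) :=
    match split i with inl j => u j | inr j => v j end.
  exists (n1 + n2)%N, (glue _ a1 a2), (glue _ m1 m2).
  split; first by move=> i; rewrite /glue; case: (split i).
  split; first by move=> i; rewrite /glue; case: (split i).
  rewrite big_split_ord /glue; congr (_ + _); apply: eq_bigr => i _.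
  + by rewrite (unsplitK (inl _ i)).
  + by rewrite (unsplitK (inr _ i)).
- move=> b _ [n [a [m [Ia [Hm ->]]]]].
  exists n, (fun i => b * a i), m; split; first by move=> i; apply: IM.
  split=> //; rewrite scaler_sumr; apply: eq_bigr => i _; by rewrite scalerA.
Qed.

Definition annihilator (H : M -> Prop) : A -> Prop :=
  fun a => forall x, H x -> a *: x = 0.

Lemma annihilator_ideal (H : M -> Prop) : is_ideal (annihilator H).
Proof.
split; first by move=> x _; rewrite scale0r.
split; first by move=> a b Ja Jb x Hx; rewrite scalerDl Ja ?Jb ?addr0.
by move=> a b Jb x Hx; rewrite -scalerA Jb ?scaler0.
Qed.

Lemma kernel_submod (M' : lmodType A) (f : {linear M -> M'}) :
  is_submod (fun x => f x = 0).
Proof.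
split; first exact: linear0.
split; first by move=> x y fx fy; rewrite linearD fx fy addr0.
by move=> a x fx; rewrite linearZ /= fx scaler0.
Qed.

End Products.

Lemma colon_ideal (A : comPzRingType) (J : A -> Prop) (a : A) :
  is_ideal J -> is_ideal (colon J a).
Proof.
move=> [J0 [JD JM]]; split; first by rewrite /colon mul0r.
split; first by move=> x y; rewrite /colon mulrDl; exact: JD.
by move=> c x; rewrite /colon -mulrA; exact: JM.
Qed.

Section TotalTorsion.
Variables (A : comPzRingType) (L : (A -> Prop) -> Prop).
Hypothesis HL : gabriel_filter L.
Variable M : lmodType A.

(* If H h is totally torsion for some h in L(sigma), so is H: the annihilator
   of H has all its colon ideals (Ann H : a), a in h, in L(sigma) by T3,
   hence lies in L(sigma) by T4. *)
Lemma ttorsion_of_prodmod (H : M -> Prop) (h : A -> Prop) :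
  L h -> ttorsion L (prodmod H h) -> ttorsion L H.
Proof.
move=> Lh [k [Lk annk]].
have [_ [_ [L_up [_ [_ L_glue]]]]] := HL.
exists (annihilator H); split; last by move=> x a Hx Ja; apply: Ja.
apply: (L_glue _ _ Lh (annihilator_ideal H)) => a ha.
apply: (L_up _ _ Lk (colon_ideal a (annihilator_ideal H))) => b kb x Hx.
by rewrite -scalerA; apply: annk => //; apply: prodmod_scale.
Qed.

Lemma companion_sub (H H' : M -> Prop) (h : A -> Prop) :
  (forall x, H' x -> H x) -> companion L H h -> companion L H' h.
Proof.
move=> H'H [Lh comp]; split=> // K sK KH' ntK _ [n [a [m [ha [H'm ->]]]]].
apply: (comp K sK (fun x Kx => H'H x (KH' x Kx)) ntK).
by exists n, a, m; split=> //; split=> // i; apply: H'H.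
Qed.

Lemma ttorsion_image (M' : lmodType A) (f : {linear M -> M'}) (h : A -> Prop) :
  L h -> (forall y, exists x, f x = y) ->
  (forall x, prodmod (fun _ : M => True) h x -> f x = 0) ->
  ttorsion L (fun _ : M' => True).
Proof.
move=> Lh surj Mh_ker; exists h; split=> // y a _ ha.
have [x <-] := surj y.
by rewrite -linearZ; apply: Mh_ker; apply: prodmod_scale.
Qed.

End TotalTorsion.

Theorem mainTheorem19 (A : comPzRingType) (L : (A -> Prop) -> Prop)
  (HL : gabriel_filter L) (M : lmodType A) (h : A -> Prop) :
  tsimple_module L M -> companion L (fun _ : M => True) h ->
  (* (1) *)
  (~ ttorsion L (prodmod (fun _ : M => True) h)) /\
  (is_submod (prodmod (fun _ : M => True) h) /\
   forall H : M -> Prop, is_submod H -> ~ ttorsion L H ->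
     forall x, prodmod (fun _ : M => True) h x -> H x) /\
  (forall H : M -> Prop, is_submod H -> ~ ttorsion L H -> tsimple L H) /\
  (* (5) *)
  (forall (M' : lmodType A) (f : {linear M -> M'}),
     tsimple_module L M' -> (forall y, exists x, f x = y) ->
     ttorsion L (fun x => f x = 0)).
Proof.
move=> [_ [M_nt _]] compM; have [Lh minimal] := compM.
have [h_ideal _] := HL; have {}h_ideal := h_ideal h Lh.
split; first by move/(ttorsion_of_prodmod HL Lh).
split; first by split; [exact: prodmod_submod | move=> H sH ntH; exact: minimal].
split.
- move=> H sH ntH; split=> //; split=> //; exists h.
  exact: companion_sub compM.
- move=> M' f [_ [M'_nt _]] surj; apply: NNPP => ker_nt.
  apply/M'_nt/(ttorsion_image Lh surj).
  exact: minimal (kernel_submod f) (fun _ _ => I) ker_nt.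
Qed.
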